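(* Let $\mathbb{F}\in\{\mathbb{R},\mathbb{C}\}$ and let $\mathcal{P}(M,N)$ be the set of Parseval frames for $\mathbb{F}^N$ with $M$ vectors. For each $M>N$ there exist constants $0<c\leq d<1$, depending only on $M$ and $N$, such that whenever $\Phi=\{\varphi_i\}_{i=1}^M\in\mathcal{P}(M,N)$ maximizes $TC$ over $\mathcal{P}(M,N)$, we have $c\leq\|\varphi_i\|\leq d$ for every $i=1,\dots,M$.
   Context: A Parseval frame for $\mathbb{F}^N$ is a family $\{\varphi_i\}_{i=1}^M\subseteq\mathbb{F}^N$ whose $N\times M$ matrix $\Phi$ (columns $\varphi_i$) satisfies $\Phi\Phi^*=I$. The total coherence is $TC(\Phi)=\sum_{i\neq j}|\langle\varphi_i,\varphi_j\rangle|$. *)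

From HB Require Import structures.
From mathcomp Require Import all_boot all_order all_algebra.
From mathcomp Require Import reals complex.
Set Implicit Arguments. Unset Strict Implicit. Unset Printing Implicit Defensive.
Import Order.TTheory GRing.Theory Num.Theory.
Local Open Scope ring_scope.

(* A frame is an N x M matrix Phi whose columns are the frame vectors
   phi_i.  The scalar field is encoded by a predicate S on entries:
   S = predT gives F = C, S = Num.real gives F = the reals inside C. *)

Section Frames.
Variable C : numClosedFieldType.

Definition adjmx (m n : nat) (A : 'M[C]_(m, n)) : 'M[C]_(n, m) :=
  \matrix_(i, j) (A j i)^*.

Definition fdot (N M : nat) (Phi : 'M[C]_(N, M)) (i j : 'I_M) : C :=
  \sum_(k < N) Phi k i * (Phi k j)^*.

Definition fnorm (N M : nat) (Phi : 'M[C]_(N, M)) (i : 'I_M) : C :=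
  sqrtC (\sum_(k < N) `|Phi k i| ^+ 2).

Definition TC (N M : nat) (Phi : 'M[C]_(N, M)) : C :=
  \sum_(i < M) \sum_(j < M | j != i) `|fdot Phi i j|.

Definition parseval (S : pred C) (N M : nat) (Phi : 'M[C]_(N, M)) : Prop :=
  (forall k i, S (Phi k i)) /\ Phi *m adjmx Phi = 1%:M.

Definition TC_maximizer (S : pred C) (N M : nat) (Phi : 'M[C]_(N, M)) : Prop :=
  parseval S Phi /\ forall Psi : 'M[C]_(N, M), parseval S Psi -> TC Psi <= TC Phi.

End Frames.

Definition scalars (R : realType) (is_real : bool) : pred R[i] :=
  if is_real then [pred z : R[i] | z \is Num.real] else predT.

From HB Require Import structures.
From mathcomp Require Import all_boot all_order all_algebra.
From mathcomp Require Import reals complex ring lra.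
Import Order.TTheory GRing.Theory Num.Theory.
Set Implicit Arguments. Unset Strict Implicit. Unset Printing Implicit Defensive.
Local Open Scope ring_scope.

(* The Gram matrix G = Phi^* Phi of a Parseval frame is an orthogonal
   projection of trace N, so TC(Phi) = sum_(a,b) |G a b| - N.  Replacing phi_i
   and phi_j by (phi_i + phi_j)/sqrt 2 and (phi_j - phi_i)/sqrt 2 keeps the
   frame Parseval, over R as over C, and changes sum_(a,b) |G a b| by at least
   |G j j - G i i| - 4 s_i, where s_i = sum_(a <> i) |G a i|.  At a maximizer
   therefore |G j j - G i i| <= 4 s_i for every j; summing over j gives
   |N - M G i i| <= 4 M s_i, while Cauchy-Schwarz and G^2 = G give
   s_i^2 <= M (G i i - G i i^2).  Hence a = ||phi_i||^2 satisfies
   (N - M a)^2 <= 16 M^3 a (1 - a), which fails once a is within 1/(128 M^3)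
   of 0 or of 1: the left side is then at least 1/4, since 1 <= N <= M - 1,
   and the right side at most 1/8. *)

Lemma sqr_sum_le (R : numDomainType) (I : finType) (P : pred I) (f : I -> R) :
  (forall k, P k -> 0 <= f k) ->
  (\sum_(k | P k) f k) ^+ 2 <= #|I|%:R * \sum_(k | P k) f k ^+ 2.
Proof.
move=> f0; pose g k := if P k then f k else 0.
have g_real k : g k \is Num.real by rewrite /g; case: ifP => // /f0/ger0_real.
have -> : \sum_(k | P k) f k = \sum_k g k by rewrite big_mkcond.
have -> : \sum_(k | P k) f k ^+ 2 = \sum_k g k ^+ 2.
  by rewrite big_mkcond; apply: eq_bigr => k _; rewrite /g; case: ifP; rewrite ?expr0n.
rewrite -(ler_pMn2r (_ : 0 < 2)%N) //.
have -> : (#|I|%:R * \sum_k g k ^+ 2) *+ 2 = \sum_a \sum_b (g a ^+ 2 + g b ^+ 2) :> R.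
  rewrite [RHS](eq_bigr (fun a => g a ^+ 2 *+ #|I| + \sum_b g b ^+ 2)); last first.
    by move=> a _; rewrite big_split /= sumr_const.
  by rewrite big_split /= sumr_const sumrMnl mulr2n mulr_natl.
rewrite expr2 mulr_suml -sumrMnl; apply: ler_sum => a _.
rewrite mulr_sumr -sumrMnl; apply: ler_sum => b _.
exact: (real_leif_mean_square_scaled (g_real a) (g_real b)).1.
Qed.

Lemma sum_pair_split (V : zmodType) (M : nat) (g : 'I_M -> 'I_M -> V) (i j : 'I_M) :
  i != j ->
  \sum_a \sum_b g a b =
    (g i i + g i j + (g j i + g j j))
    + \sum_(b | (b != i) && (b != j)) (g i b + g j b)
    + \sum_(a | (a != i) && (a != j)) (g a i + g a j)
    + \sum_(a | (a != i) && (a != j)) \sum_(b | (b != i) && (b != j)) g a b.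
Proof.
move=> ij; have split2 (f : 'I_M -> V) :
    \sum_l f l = f i + f j + \sum_(l | (l != i) && (l != j)) f l.
  by rewrite (bigD1 i) //= (bigD1 j) 1?eq_sym //= addrA.
under eq_bigr => a _ do rewrite split2.
rewrite split2 !big_split /= -!addrA; do 2 congr (_ + _).
by rewrite addrCA; congr (_ + _); rewrite addrCA.
Qed.

Section Gram.
Variables (C : numClosedFieldType) (N M : nat) (Phi : 'M[C]_(N, M)).
Local Notation G := (fdot Phi).

Lemma fdotC a b : (G a b)^* = G b a.
Proof.
rewrite /fdot rmorph_sum; apply: eq_bigr => k _.
by rewrite rmorphM /= conjCK mulrC.
Qed.

Lemma normr_fdotC a b : `|G a b| = `|G b a|.
Proof. by rewrite -fdotC norm_conjC. Qed.

Lemma fdot_diagE a : G a a = \sum_k `|Phi k a| ^+ 2.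
Proof. by apply: eq_bigr => k _; rewrite normCK. Qed.

Lemma fdot_diag_ge0 a : 0 <= G a a.
Proof. by rewrite fdot_diagE sumr_ge0 // => k _; rewrite exprn_ge0. Qed.

Definition gram_l1 := \sum_a \sum_b `|G a b|.

Definition coherence_at i := \sum_(a | a != i) `|G a i|.

Lemma coherence_at_ge0 i : 0 <= coherence_at i.
Proof. exact: sumr_ge0. Qed.

Section Parseval.
Variable S : pred C.
Hypothesis Phi_parseval : parseval S Phi.

Lemma parseval_trace : \sum_a G a a = N%:R.
Proof.
case: Phi_parseval => _ /matrixP PhiP.
rewrite /fdot exchange_big /= (eq_bigr (fun=> 1)) ?sumr_const ?card_ord // => k _.
have := PhiP k k; rewrite !mxE eqxx mulr1n => <-.
by apply: eq_bigr => a _; rewrite mxE.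
Qed.

Lemma parseval_gram_row i : \sum_b `|G i b| ^+ 2 = G i i.
Proof.
case: Phi_parseval => _ PhiP; set B := adjmx Phi.
have gramE a b : (B *m Phi) a b = G b a.
  by rewrite mxE /fdot; apply: eq_bigr => k _; rewrite mxE mulrC.
have idem : (B *m Phi) *m (B *m Phi) = B *m Phi.
  by rewrite mulmxA -(mulmxA B) PhiP mulmx1.
have /matrixP/(_ i i) := idem; rewrite mxE gramE => <-.
by apply: eq_bigr => b _; rewrite !gramE normCK fdotC mulrC.
Qed.

Lemma TC_parseval : TC Phi = gram_l1 - N%:R.
Proof.
rewrite -parseval_trace /TC /gram_l1 -sumrB; apply: eq_bigr => a _.
rewrite [in RHS](bigD1 a) //= (ger0_norm (fdot_diag_ge0 a)).
by rewrite addrAC subrr add0r.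
Qed.

Lemma coherence_at_sqr_le i : coherence_at i ^+ 2 <= M%:R * (G i i - G i i ^+ 2).
Proof.
have -> : G i i - G i i ^+ 2 = \sum_(a | a != i) `|G a i| ^+ 2.
  rewrite -{1}parseval_gram_row (bigD1 i) //= (ger0_norm (fdot_diag_ge0 i)).
  rewrite addrAC subrr add0r.
  by apply: eq_bigr => a _; rewrite normr_fdotC.
by rewrite -[M in M%:R]card_ord sqr_sum_le.
Qed.

End Parseval.
End Gram.

Section PairRotation.
Context {C : numClosedFieldType}.

Definition isqrt2 : C := (sqrtC 2)^-1.

Lemma isqrt2_ge0 : 0 <= isqrt2.
Proof. by rewrite invr_ge0 sqrtC_ge0 ler0n. Qed.

Lemma conj_isqrt2 : isqrt2^* = isqrt2.
Proof. exact: geC0_conj isqrt2_ge0. Qed.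

Lemma isqrt2_sqr : isqrt2 ^+ 2 * 2 = 1.
Proof. by rewrite exprVn sqrtCK mulVf ?pnatr_eq0. Qed.

Lemma isqrt2_mul2 : isqrt2 * 2 = sqrtC 2.
Proof.
rewrite -[X in _ * X](sqrtCK 2) expr2 mulrA mulVf ?mul1r //.
by rewrite sqrtC_eq0 pnatr_eq0.
Qed.

Lemma rotate_dot (x y u v : C) :
  (x + y) * isqrt2 * ((u + v) * isqrt2)^* + (y - x) * isqrt2 * ((v - u) * isqrt2)^*
  = x * u^* + y * v^*.
Proof.
rewrite !(rmorphM, rmorphD, rmorphN) /= conj_isqrt2.
by rewrite -[RHS]mul1r -isqrt2_sqr; ring.
Qed.

Lemma rotate_cross (x y : C) :
  (x + y) * isqrt2 * ((y - x) * isqrt2)^* + (y - x) * isqrt2 * ((x + y) * isqrt2)^*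
  = y * y^* - x * x^*.
Proof.
rewrite !(rmorphM, rmorphD, rmorphN) /= conj_isqrt2.
by rewrite -[RHS]mul1r -isqrt2_sqr; ring.
Qed.

Lemma rotate_norm_ge (x y : C) : `|y| - `|x| <= `|(x + y) * isqrt2| + `|(y - x) * isqrt2|.
Proof.
rewrite !normrM (ger0_norm isqrt2_ge0) -mulrDl.
apply: le_trans (_ : `|y| <= _); first by rewrite lerBlDr lerDl.
have sqrt2_ge1 : 1 <= sqrtC (2 : C) by rewrite -{1}sqrtC1 ler_sqrtC ?nnegrE ?ler01 ?ler0n ?ler1n.
apply: le_trans (_ : `|y| * (isqrt2 * 2) <= _); first by rewrite isqrt2_mul2 ler_peMr.
rewrite mulrCA mulrC ler_wpM2r ?isqrt2_ge0 //.
have -> : `|y| * 2 = `|(x + y) + (y - x)|.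
  by rewrite (_ : _ + _ = y * 2) ?normrM ?normr_nat //; ring.
exact: ler_normD.
Qed.

Variables (N M : nat) (Phi : 'M[C]_(N, M)) (i j : 'I_M).

Definition rotate_pair : 'M[C]_(N, M) :=
  \matrix_(k, l) (if l == i then (Phi k i + Phi k j) * isqrt2
                  else if l == j then (Phi k j - Phi k i) * isqrt2 else Phi k l).

Hypothesis neq_ij : i != j.
Local Notation Psi := rotate_pair.
Local Notation G := (fdot Phi).
Local Notation G' := (fdot Psi).

Lemma rotate_pair_i k : Psi k i = (Phi k i + Phi k j) * isqrt2.
Proof. by rewrite mxE eqxx. Qed.

Lemma rotate_pair_j k : Psi k j = (Phi k j - Phi k i) * isqrt2.
Proof. by rewrite mxE eqxx eq_sym (negbTE neq_ij). Qed.

Lemma rotate_pair_other k l : l != i -> l != j -> Psi k l = Phi k l.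
Proof. by move=> li lj; rewrite mxE (negbTE li) (negbTE lj). Qed.

Lemma fdot_rotate_other a b :
  a != i -> a != j -> b != i -> b != j -> G' a b = G a b.
Proof. by move=> ai aj bi bj; apply: eq_bigr => k _; rewrite !rotate_pair_other. Qed.

Lemma fdot_rotate_row b : b != i -> b != j ->
  G' i b = (G i b + G j b) * isqrt2 /\ G' j b = (G j b - G i b) * isqrt2.
Proof.
move=> bi bj; rewrite /fdot -big_split -sumrB !mulr_suml /=; split; apply: eq_bigr => k _;
  by rewrite (rotate_pair_other _ bi bj) (rotate_pair_i, rotate_pair_j); ring.
Qed.

Lemma fdot_rotate_col a : a != i -> a != j ->
  G' a i = (G a i + G a j) * isqrt2 /\ G' a j = (G a j - G a i) * isqrt2.
Proof.
move=> ai aj; rewrite /fdot -big_split -sumrB !mulr_suml /=; split; apply: eq_bigr => k _;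
  by rewrite (rotate_pair_other _ ai aj) (rotate_pair_i, rotate_pair_j)
             !(rmorphM, rmorphD, rmorphN) /= conj_isqrt2; ring.
Qed.

Lemma fdot_rotate_diag : G' i i + G' j j = G i i + G j j.
Proof.
rewrite /fdot -!big_split /=; apply: eq_bigr => k _.
by rewrite rotate_pair_i rotate_pair_j rotate_dot.
Qed.

Lemma fdot_rotate_cross : G' i j + G' j i = G j j - G i i.
Proof.
rewrite /fdot -big_split -sumrB /=; apply: eq_bigr => k _.
by rewrite rotate_pair_i rotate_pair_j rotate_cross.
Qed.

Lemma parseval_rotate_pair (S : pred C) :
  (forall x y, S x -> S y -> S ((x + y) * isqrt2) /\ S ((y - x) * isqrt2)) ->
  parseval S Phi -> parseval S Psi.
Proof.
move=> S_rot [S_Phi PhiP]; split.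
  move=> k l; have [S_i S_j] := S_rot _ _ (S_Phi k i) (S_Phi k j).
  have [->|li] := eqVneq l i; first by rewrite rotate_pair_i.
  have [->|lj] := eqVneq l j; first by rewrite rotate_pair_j.
  by rewrite rotate_pair_other.
have entryE (A : 'M[C]_(N, M)) k l : (A *m adjmx A) k l = \sum_m A k m * (A l m)^*.
  by rewrite mxE; apply: eq_bigr => m _; rewrite mxE.
rewrite -PhiP; apply/matrixP => k l; rewrite !entryE.
rewrite (bigD1 i) // (bigD1 j) 1?eq_sym //= [in RHS](bigD1 i) // [in RHS](bigD1 j) 1?eq_sym //=.
rewrite !addrA !rotate_pair_i !rotate_pair_j rotate_dot; congr (_ + _).
by apply: eq_bigr => m /andP[mi mj]; rewrite !rotate_pair_other.
Qed.

Lemma rotate_block_gain :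
  `|G j j - G i i| - 2 * `|G j i| <=
  `|G' i i| - `|G i i| + (`|G' i j| - `|G i j|) + (`|G' j i| - `|G j i| + (`|G' j j| - `|G j j|)).
Proof.
have := ler_normD (G' i j) (G' j i); rewrite fdot_rotate_cross => cross.
rewrite !(ger0_norm (fdot_diag_ge0 _ _)) (normr_fdotC Phi i j) -subr_ge0.
rewrite (_ : _ - _ = `|G' i j| + `|G' j i| - `|G j j - G i i|
                     + (G' i i + G' j j - (G i i + G j j))); last by ring.
by rewrite fdot_rotate_diag subrr addr0 subr_ge0.
Qed.

Lemma rotate_row_loss b : b != i -> b != j ->
  - (2 * `|G b i|) <= `|G' i b| - `|G i b| + (`|G' j b| - `|G j b|).
Proof.
move=> bi bj; have [-> ->] := fdot_rotate_row bi bj.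
rewrite (normr_fdotC Phi b i) -subr_ge0 (_ : _ - _ = `|(G i b + G j b) * isqrt2|
  + `|(G j b - G i b) * isqrt2| - (`|G j b| - `|G i b|)); last by ring.
by rewrite subr_ge0 rotate_norm_ge.
Qed.

Lemma rotate_col_loss a : a != i -> a != j ->
  - (2 * `|G a i|) <= `|G' a i| - `|G a i| + (`|G' a j| - `|G a j|).
Proof.
move=> ai aj; have [-> ->] := fdot_rotate_col ai aj.
rewrite -subr_ge0 (_ : _ - _ = `|(G a i + G a j) * isqrt2|
  + `|(G a j - G a i) * isqrt2| - (`|G a j| - `|G a i|)); last by ring.
by rewrite subr_ge0 rotate_norm_ge.
Qed.

Lemma gram_l1_rotate_pair :
  `|G j j - G i i| - 4 * coherence_at Phi i <= gram_l1 Psi - gram_l1 Phi.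
Proof.
rewrite /gram_l1 -[X in _ <= X]sumrB; under [X in _ <= X]eq_bigr => a _ do rewrite -sumrB.
rewrite (sum_pair_split (fun a b => `|G' a b| - `|G a b|) neq_ij) /=.
rewrite [X in _ <= _ + X]big1 ?addr0; last first.
  move=> a /andP[ai aj]; apply: big1 => b /andP[bi bj].
  by rewrite fdot_rotate_other ?subrr.
have rows : \sum_(b | (b != i) && (b != j)) - (2 * `|G b i|) <=
            \sum_(b | (b != i) && (b != j)) (`|G' i b| - `|G i b| + (`|G' j b| - `|G j b|)).
  by apply: ler_sum => b /andP[]; apply: rotate_row_loss.
have cols : \sum_(a | (a != i) && (a != j)) - (2 * `|G a i|) <=
            \sum_(a | (a != i) && (a != j)) (`|G' a i| - `|G a i| + (`|G' a j| - `|G a j|)).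
  by apply: ler_sum => a /andP[]; apply: rotate_col_loss.
apply: le_trans (lerD (lerD rotate_block_gain rows) cols).
rewrite /coherence_at (bigD1 j) 1?eq_sym //= !sumrN -!mulr_sumr -subr_ge0.
rewrite (_ : _ - _ = 2 * `|G j i|); last by ring.
by rewrite mulr_ge0 ?ler0n.
Qed.

End PairRotation.

Section Maximizer.
Variables (C : numClosedFieldType) (S : pred C) (N M : nat) (Phi : 'M[C]_(N, M)).
Hypothesis S_rotate :
  forall x y, S x -> S y -> S ((x + y) * isqrt2) /\ S ((y - x) * isqrt2).
Hypothesis Phi_max : TC_maximizer S Phi.
Local Notation G := (fdot Phi).

Lemma maximizer_diag_gap i j : `|G j j - G i i| <= 4 * coherence_at Phi i.
Proof.
have [->|ji] := eqVneq j i; first by rewrite subrr normr0 mulr_ge0 ?coherence_at_ge0.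
have ij : i != j by rewrite eq_sym.
case: Phi_max => P_Phi Phi_ge.
have P_Psi := parseval_rotate_pair ij S_rotate P_Phi.
have no_gain : gram_l1 (rotate_pair Phi i j) <= gram_l1 Phi.
  by rewrite -(lerD2r (- N%:R)) -(TC_parseval P_Phi) -(TC_parseval P_Psi) Phi_ge.
by rewrite -subr_le0 (le_trans (gram_l1_rotate_pair Phi ij)) // subr_le0.
Qed.

Lemma maximizer_trace_gap i : `|N%:R - M%:R * G i i| <= M%:R * (4 * coherence_at Phi i).
Proof.
case: Phi_max => P_Phi _.
have -> : N%:R - M%:R * G i i = \sum_j (G j j - G i i).
  by rewrite sumrB (parseval_trace P_Phi) sumr_const card_ord mulr_natl.
apply: le_trans (ler_norm_sum _ _ _) _.
apply: le_trans (_ : _ <= \sum_(j < M) 4 * coherence_at Phi i) _.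
  by apply: ler_sum => j _; apply: maximizer_diag_gap.
by rewrite sumr_const card_ord !mulr_natl.
Qed.

Lemma maximizer_norm_sq_dev i :
  (N%:R - M%:R * G i i) ^+ 2 <= 16 * M%:R ^+ 3 * (G i i - G i i ^+ 2).
Proof.
case: (Phi_max) => P_Phi _.
have dev_real : N%:R - M%:R * G i i \is Num.real.
  by rewrite rpredB ?rpredM ?realn ?ger0_real ?fdot_diag_ge0.
apply: le_trans (_ : (M%:R * (4 * coherence_at Phi i)) ^+ 2 <= _).
  rewrite -real_normK // lerXn2r ?nnegrE ?maximizer_trace_gap //.
  by rewrite mulr_ge0 ?mulr_ge0 ?coherence_at_ge0.
rewrite (_ : (M%:R * _) ^+ 2 = 16 * M%:R ^+ 2 * coherence_at Phi i ^+ 2); last by ring.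
rewrite (_ : 16 * _ * _ = 16 * M%:R ^+ 2 * (M%:R * (G i i - G i i ^+ 2))); last by ring.
by apply: ler_wpM2l; [rewrite mulr_ge0 ?exprn_ge0 | apply: coherence_at_sqr_le P_Phi i].
Qed.

End Maximizer.

Section NormMargin.
Variables (R : realFieldType) (M : nat).
Hypothesis M_gt0 : (0 < M)%N.

Definition norm_sq_margin : R := (128 * M ^ 3)%:R^-1.
Local Notation e := norm_sq_margin.

Lemma norm_sq_margin_gt0 : 0 < e.
Proof. by rewrite invr_gt0 ltr0n muln_gt0 expn_gt0 M_gt0. Qed.

Lemma norm_sq_marginK : e * (128 * M%:R ^+ 3) = 1.
Proof. by rewrite -natrX -natrM mulVf // pnatr_eq0 -lt0n muln_gt0 expn_gt0 M_gt0. Qed.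

Lemma norm_sq_margin_le : e <= 1 - e.
Proof.
have := norm_sq_marginK; have := norm_sq_margin_gt0.
have : 1 <= M%:R ^+ 3 :> R by rewrite exprn_ege1 // ler1n.
nra.
Qed.

Lemma frame_norm_sq_bounds (N : nat) (a : R) : (0 < N)%N -> (N < M)%N ->
  (N%:R - M%:R * a) ^+ 2 <= 16 * M%:R ^+ 3 * (a - a ^+ 2) -> e <= a <= 1 - e.
Proof.
move=> N_gt0 NM dev.
have N_ge1 : 1 <= N%:R :> R by rewrite ler1n.
have NM_R : N%:R + 1 <= M%:R :> R by rewrite natr1 ler_nat.
have e_gt0 := norm_sq_margin_gt0; have eK := norm_sq_marginK.
set K := 16 * M%:R ^+ 3 in dev *.
have K_gt0 : 0 < K by rewrite mulr_gt0 ?exprn_gt0 //; lra.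
have Ke : K * e = 1 / 8 by rewrite /K; lra.
have a01 : 0 <= a - a ^+ 2.
  by rewrite -(pmulr_rge0 _ K_gt0); apply: le_trans dev; apply: sqr_ge0.
have Me : M%:R * e <= 1 / 2.
  have : 1 <= M%:R ^+ 2 :> R by nra.
  nra.
have sq_ge (x : R) : 1 / 2 <= x -> 1 / 4 <= x ^+ 2 by nra.
apply/andP; split; rewrite leNgt; apply/negP => ha.
- have a_ge0 : 0 <= a by nra.
  have : K * (a - a ^+ 2) < K * e by rewrite ltr_pM2l //; nra.
  have : 1 / 4 <= (N%:R - M%:R * a) ^+ 2 by apply: sq_ge; nra.
  lra.
- have : K * (a - a ^+ 2) < K * e by rewrite ltr_pM2l //; nra.
  have : 1 / 4 <= (N%:R - M%:R * a) ^+ 2.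
    by rewrite -sqrrN opprB; apply: sq_ge; nra.
  lra.
Qed.

End NormMargin.

Local Open Scope complex_scope.

Lemma scalars_rotate (R : realType) (is_real : bool) (x y : R[i]) :
  scalars is_real x -> scalars is_real y ->
  scalars is_real ((x + y) * isqrt2) /\ scalars is_real ((y - x) * isqrt2).
Proof.
rewrite /scalars; case: is_real => //= x_real y_real.
have isqrt2_real : (isqrt2 : R[i]) \is Num.real := ger0_real isqrt2_ge0.
by split; rewrite realM ?realD ?realN.
Qed.

Theorem theorem4 (R : realType) (is_real : bool) (M N : nat) :
  (0 < N)%N -> (N < M)%N ->
  exists c d : R[i],
    [/\ 0 < c, c <= d, d < 1 &
      forall Phi : 'M[R[i]]_(N, M),
        TC_maximizer (@scalars R is_real) Phi ->
        forall i : 'I_M, c <= fnorm Phi i <= d].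
Proof.
move=> N_gt0 NM; have M_gt0 := ltn_trans N_gt0 NM.
pose e : R := norm_sq_margin R M.
have nneg_C (r : R) : 0 <= r -> r%:C \is Num.nneg by rewrite nnegrE ler0c.
have e_gt0 : 0 < e := norm_sq_margin_gt0 R M_gt0.
have e_le : e <= 1 - e := norm_sq_margin_le R M_gt0.
exists (sqrtC e%:C), (sqrtC (1 - e)%:C); split.
- by rewrite sqrtC_gt0 ltcE /= eqxx.
- by rewrite ler_sqrtC ?nneg_C ?lecR //; lra.
- by rewrite -sqrtC1 ltr_sqrtC ?nneg_C ?ltcE /= ?eqxx; lra.
move=> Phi Phi_max i.
have [a a_eq] : exists a : R, fdot Phi i i = a%:C.
  by apply/complex_realP/ger0_real/fdot_diag_ge0.
have dev : (N%:R - M%:R * a) ^+ 2 <= 16 * M%:R ^+ 3 * (a - a ^+ 2).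
  rewrite -lecR !(rmorphXn, rmorphB, rmorphM, rmorph_nat).
  by have := maximizer_norm_sq_dev (@scalars_rotate R is_real) Phi_max i; rewrite a_eq.
have /andP[lo hi] := frame_norm_sq_bounds M_gt0 N_gt0 NM dev; rewrite -/e in lo hi.
rewrite /fnorm -fdot_diagE a_eq !ler_sqrtC ?nneg_C ?lecR ?lo ?hi //; lra.
Qed.
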